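(* Let $G$ be a finite group, $\chi\in\operatorname{Irr}(G)$, and $\mathbb{E}:=\mathbb{Q}(\chi)$. Then for every subfield $\mathbb{F}$ of $\mathbb{E}$ (containing $\mathbb{Q}$) there exist a finite group $H$ and $\psi\in\operatorname{Irr}(H)$ such that $\mathbb{Q}(\psi)=\mathbb{F}$ and $\psi(1)=n\,\chi(1)^n$, where $n:=[\mathbb{E}:\mathbb{F}]$.
   Context: $\operatorname{Irr}(G)$ is the set of complex irreducible characters of $G$; $\mathbb{Q}(\chi)$ is the field generated over $\mathbb{Q}$ by the values of $\chi$ (an abelian extension of $\mathbb{Q}$). *)

From mathcomp Require Import all_boot all_order all_algebra all_fingroup all_solvable all_field all_character.
Set Implicit Arguments. Unset Strict Implicit. Unset Printing Implicit Defensive.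
Import GRing.Theory Num.Theory.
Local Open Scope ring_scope.

(* Subfields of algC, represented as (Prop-valued) predicates.  Every
   subfield of algC automatically contains Q (characteristic 0). *)
Definition subfieldC (F : algC -> Prop) : Prop :=
  [/\ F 1,
      (forall x y, F x -> F y -> F (x - y)) &
      (forall x y, F x -> F y -> F (x / y))].

Definition gen_fieldC (S : algC -> Prop) : algC -> Prop :=
  fun x => forall F, subfieldC F -> (forall y, S y -> F y) -> F x.

Definition Qchar (gT : finGroupType) (G : {group gT}) (chi : 'CF(G)) : algC -> Prop :=
  gen_fieldC (fun y => exists g : gT, y = chi g).

Definition field_degreeC (F E : algC -> Prop) (n : nat) : Prop :=
  exists b : 'I_n -> algC,
    [/\ (forall i, E (b i)),
        (forall x, E x -> exists c : 'I_n -> algC,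
            (forall i, F (c i)) /\ x = \sum_(i < n) c i * b i) &
        (forall c : 'I_n -> algC, (forall i, F (c i)) ->
            \sum_(i < n) c i * b i = 0 -> forall i, c i = 0)].

From mathcomp Require Import all_boot all_order all_algebra all_fingroup all_solvable all_field all_character.
From Stdlib Require Import Classical.
Import GRing.Theory Num.Theory.
Local Open Scope ring_scope.
Set Implicit Arguments. Unset Strict Implicit. Unset Printing Implicit Defensive.

(* Let T = Gal(E/F), a group of order n, and let H be the wreath product of G
   by T acting regularly on itself.  The Galois conjugates chi^t (t in T) are
   pairwise distinct irreducible characters, so the tensor product of the
   chi^t is an irreducible character of the base group G^T whose inertia group
   in H is G^T; inducing it gives psi in Irr(H), of degree n chi(1)^n.  The
   values of psi are sums over T of products of values of the chi^t; a Galois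
   automorphism fixing F permutes the chi^t and so fixes psi, whence
   Q(psi) <= F.  Conversely an automorphism fixing Q(psi) fixes the sum of
   the tensor characters indexed by T, so it maps chi to some chi^t, acts on E
   as t, and fixes F.  All values live in a cyclotomic field Qn, whose Galois
   group is abelian, so that E and F are Galois over Q. *)

Section SubfieldC.
Variables (K : algC -> Prop) (sfK : subfieldC K).

Lemma subfieldC1 : K 1. Proof. by case: sfK. Qed.

Lemma subfieldCB x y : K x -> K y -> K (x - y).
Proof. by case: sfK => _ KB _; apply: KB. Qed.

Lemma subfieldC_div x y : K x -> K y -> K (x / y).
Proof. by case: sfK => _ _ Kdiv; apply: Kdiv. Qed.

Lemma subfieldC0 : K 0.
Proof. by rewrite -(subrr 1); apply: subfieldCB; apply: subfieldC1. Qed.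

Lemma subfieldCN x : K x -> K (- x).
Proof. by move=> Kx; rewrite -sub0r; apply: subfieldCB => //; apply: subfieldC0. Qed.

Lemma subfieldCD x y : K x -> K y -> K (x + y).
Proof. by move=> Kx Ky; rewrite -[y]opprK; apply: subfieldCB => //; apply: subfieldCN. Qed.

Lemma subfieldCM x y : K x -> K y -> K (x * y).
Proof.
move=> Kx Ky; rewrite -[y]invrK; apply: subfieldC_div => //.
by rewrite -div1r; apply: subfieldC_div => //; apply: subfieldC1.
Qed.

Lemma subfieldC_nat n : K n%:R.
Proof.
elim: n => [|n IHn]; first exact: subfieldC0.
by rewrite -addn1 natrD; apply: subfieldCD => //; apply: subfieldC1.
Qed.

Lemma subfieldC_rat a : K (ratr a).
Proof.
have Kint (z : int) : K z%:~R.
  by case: z => m; rewrite ?NegzE ?mulrNz; [|apply: subfieldCN]; apply: subfieldC_nat.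
by rewrite /ratr; apply: subfieldC_div.
Qed.

End SubfieldC.

Lemma gen_fieldC_subfield S : subfieldC (gen_fieldC S).
Proof.
split=> [K sfK _ | x y Sx Sy K sfK SK | x y Sx Sy K sfK SK].
- exact: subfieldC1.
- by apply: subfieldCB => //; [apply: Sx | apply: Sy].
- by apply: subfieldC_div => //; [apply: Sx | apply: Sy].
Qed.

Lemma gen_fieldC_gen S y : S y -> gen_fieldC S y.
Proof. by move=> Sy K _; apply. Qed.

Lemma rmorph_image_subfieldC (L : fieldType) (f : {rmorphism L -> algC})
    (P : L -> Prop) :
  P 1 -> (forall x y, P x -> P y -> P (x - y)) ->
  (forall x y, P x -> P y -> P (x / y)) ->
  subfieldC (fun z => exists2 x, P x & z = f x).
Proof.
move=> P1 PB Pdiv; split.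
- by exists 1; rewrite ?rmorph1.
- by move=> _ _ [x Px ->] [y Py ->]; exists (x - y); [apply: PB | rewrite rmorphB].
- by move=> _ _ [x Px ->] [y Py ->]; exists (x / y); [apply: Pdiv | rewrite fmorph_div].
Qed.

Section VspaceOfPred.
Variables (F : fieldType) (vT : vectType F) (P : vT -> Prop).
Hypotheses (P0 : P 0) (PD : forall x y, P x -> P y -> P (x + y))
  (PZ : forall a x, P x -> P (a *: x)).

(* P need not be decidable: we enlarge a subspace of P one vector at a time,
   and the dimension of vT bounds the number of steps. *)
Lemma vspace_of_pred : exists V : {vspace vT}, forall x, x \in V <-> P x.
Proof.
have grow k : exists V : {vspace vT}, (forall x, x \in V -> P x) /\
    ((k <= \dim V)%N \/ forall x, P x -> x \in V).
  elim: k => [|k [V [VP [le_k_V | PV]]]].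
  - by exists 0%VS; split; [move=> x; rewrite memv0 => /eqP-> | left].
  - have [PV | ] := classic (forall x, P x -> x \in V).
      by exists V; split=> //; right.
    move=> /not_all_ex_not[x PnotVx]; have [Px notVx] := imply_to_and _ _ PnotVx.
    exists (V + <[x]>)%VS; split.
      by move=> _ /memv_addP[v Vv [_ /vlineP[a ->] ->]]; apply: PD; auto.
    left; apply: leq_ltn_trans le_k_V _.
    rewrite (ltn_leqif (dimv_leqif_eq (addvSl V <[x]>))).
    apply: contra_notN notVx => /eqP ->.
    exact: subvP (addvSr V _) _ (memv_line x).
  - by exists V; split=> //; right.
have [V [VP [lt_dim | PV]]] := grow (\dim (fullv : {vspace vT})).+1.
  by have := dimvS (subvf V); rewrite leqNgt lt_dim.
by exists V => x; split; [apply: VP | apply: PV].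
Qed.

End VspaceOfPred.

Lemma rmorph_preimage_subfield (L : fieldExtType rat)
    (f : {rmorphism L -> algC}) K :
  subfieldC K -> exists Kp : {subfield L}, forall y, y \in Kp <-> K (f y).
Proof.
move=> sfK; have [|x y|a x|V VK] := @vspace_of_pred _ L (fun y => K (f y)).
- by rewrite rmorph0; apply: subfieldC0.
- by rewrite rmorphD; apply: subfieldCD.
- by rewrite rmorphZ_num; apply: subfieldCM => //; apply: subfieldC_rat.
have V_alg : is_aspace V.
  rewrite /is_aspace has_algid1 /=; last by apply/VK; rewrite rmorph1; apply: subfieldC1.
  by apply/prodvP => x y /VK Kx /VK Ky; apply/VK; rewrite rmorphM; apply: subfieldCM.
by exists (ASpace V_alg).
Qed.

Lemma field_degreeC_dimv (k : fieldType) (L : fieldExtType k)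
    (f : {rmorphism L -> algC}) (E F : algC -> Prop) (Ep Fp : {subfield L}) n :
  (forall x, x \in Ep <-> E (f x)) -> (forall x, x \in Fp <-> F (f x)) ->
  subfieldC F -> (forall y, E y -> exists x, y = f x) -> (forall x, F x -> E x) ->
  field_degreeC F E n -> \dim Ep = (n * \dim Fp)%N.
Proof.
move=> EpE FpF sfF fL FE [b [Eb spanb freeb]].
have /fin_all_exists[b' Db'] i : exists x, b i = f x by apply/fL/Eb.
have b'_neq0 i : b' i != 0.
  apply/eqP=> b'i0; have Fdelta j : F (j == i)%:R by apply: subfieldC_nat.
  suff /(freeb _ Fdelta)/(_ i)/eqP : \sum_j (j == i)%:R * b j = 0.
    by rewrite eqxx oner_eq0.
  rewrite (bigD1 i) //= big1 => [|j /negPf->]; last by rewrite mul0r.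
  by rewrite eqxx mul1r addr0 Db' b'i0 rmorph0.
have defEp : Ep = (\sum_i Fp * <[b' i]>)%VS :> {vspace L}.
  apply/eqP; rewrite eqEsubv; apply/andP; split; last first.
    apply/subv_sumP => i _; apply: prodv_sub; last by rewrite -memvE EpE -Db'.
    by apply/subvP => x /FpF /FE /EpE.
  apply/subvP => x /EpE /spanb[c [Fc Dx]].
  have /fin_all_exists[c' Dc'] i : exists y, c i = f y by apply/fL/FE.
  have -> : x = \sum_i c' i * b' i.
    apply: (fmorph_inj f); rewrite Dx rmorph_sum; apply: eq_bigr => i _.
    by rewrite rmorphM -Dc' -Db'.
  apply: memv_sumr => i _; rewrite memv_mul ?memv_line //.
  by apply/FpF; rewrite -Dc'.
rewrite defEp; have /directvP/= -> : directv (\sum_i Fp * <[b' i]>).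
  apply/directv_sum_independent => u Fpb'u sum_u0 i _.
  have /fin_all_exists2[c Fpc Du] j : exists2 c, c \in Fp & u j = c * b' j.
    by have /memv_cosetP[c Fpc ->] := Fpb'u j isT; exists c.
  have Ffc j : F (f (c j)) by apply/FpF.
  apply/eqP; rewrite Du mulf_eq0 -(fmorph_eq0 f) (freeb _ Ffc) ?eqxx //.
  transitivity (f (\sum_j u j)); last by rewrite sum_u0 rmorph0.
  rewrite rmorph_sum.
  by apply: eq_bigr => j _; rewrite Du rmorphM Db'.
rewrite (eq_bigr (fun _ => \dim Fp)) => [|i _].
  by rewrite sum_nat_const card_ord.
by rewrite dim_cosetv_unit // unitfE.
Qed.

Lemma inertia_Ind_irr (gT : finGroupType) (G H : {group gT}) (s : Iirr H) :
  (H <| G)%g -> ('I_G['chi_s] = H)%g -> 'Ind[G] 'chi_s \in irr G.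
Proof.
move=> nsHG /group_inj IsH; have [] := constt_Inertia_bijection s nsHG.
by rewrite IsH cfInd_id => -> //; rewrite constt_irr !inE.
Qed.

Lemma irr_sum_eq (gT : finGroupType) (G : {group gT}) (J : finType)
    (phi psi : J -> 'CF(G)) :
    (forall j, phi j \in irr G) -> (forall j, psi j \in irr G) ->
  \sum_j phi j = \sum_j psi j -> forall i, exists j, phi i = psi j.
Proof.
move=> phi_irr psi_irr eq_sum i.
have /fin_all_exists[k Dk] j : exists k, phi j = 'chi_k by apply/irrP.
have /fin_all_exists[k' Dk'] j : exists k, psi j = 'chi_k by apply/irrP.
have: '[phi i, \sum_j psi j] != 0.
  rewrite -eq_sum cfdot_sumr (bigD1 i) // Dk cfdot_irr eqxx lt0r_neq0 //.
  by rewrite ltr_pwDl ?ltr01 // sumr_ge0 // => j _; rewrite !Dk cfdot_irr ler0n.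
rewrite cfdot_sumr => nz_dot; have [j] : exists j, '[phi i, psi j] != 0.
  apply/existsP; apply: contraR nz_dot => /existsPn zero_dot.
  by apply/eqP/big1 => j _; apply/eqP/negbNE/zero_dot.
by rewrite Dk Dk' cfdot_irr pnatr_eq0 eqb0 negbK => /eqP->; exists j.
Qed.

Section WreathProduct.
Variables (gT : finGroupType) (G : {group gT}) (I : finGroupType).
Local Notation fT := {dffun forall i : I, (fun _ => gT) i}.
Local Notation delta i := (@dfung1 I (fun _ => gT) i).

Definition wreath_base : {group fT} := setXn_group (fun _ : I => G).

Lemma in_wreath_base f : (f \in wreath_base) = [forall i, f i \in G].
Proof. by rewrite inE. Qed.

Definition wreath_shift (f : fT) t : fT := [ffun i => f (i * t^-1)%g].

Lemma wreath_shift_base f t : f \in wreath_base -> wreath_shift f t \in wreath_base.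
Proof.
by rewrite !in_wreath_base => /forallP Gf; apply/forallP => i; rewrite ffunE.
Qed.

(* The shift is made trivial outside the base group, so that it becomes a
   group action on it. *)
Definition wreath_to f t := if f \in wreath_base then wreath_shift f t else f.

Lemma wreath_to1 : wreath_to^~ 1%g =1 id.
Proof.
move=> f; rewrite /wreath_to; case: ifP => // _.
by apply/ffunP => i; rewrite ffunE invg1 mulg1.
Qed.

Lemma wreath_toM f : act_morph wreath_to f.
Proof.
move=> s t; rewrite /wreath_to; case: ifP => [Bf | /negbT/negPf-> //].
by rewrite wreath_shift_base //; apply/ffunP => i; rewrite !ffunE invMg mulgA.
Qed.

Definition wreath_act := TotalAction wreath_to1 wreath_toM.

Lemma wreath_act_is_groupAction : is_groupAction wreath_base wreath_act.
Proof.
move=> t _; rewrite inE; apply/andP; split.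
  apply/subsetP => f; rewrite inE /= actpermE /= /wreath_to.
  by apply: contraR => /negPf->; rewrite eqxx.
apply/morphicP => f g Bf Bg; rewrite !actpermE /= /wreath_to Bf Bg groupM //.
by apply/ffunP => i; rewrite !ffunE.
Qed.

Definition wreath_gact := GroupAction wreath_act_is_groupAction.
Local Notation sdT := (sdprod_by wreath_gact).
Local Notation inB := (sdpair1 wreath_gact).
Local Notation inT := (sdpair2 wreath_gact).

Definition wreath : {group sdT} := [set: sdT]%G.
Definition wbase : {group sdT} := (inB @* wreath_base)%G.
Definition wtop : {group sdT} := (inT @* [set: I])%G.

Lemma wreath_sdprod : (wbase ><| wtop = wreath)%g.
Proof. exact: sdprod_sdpair. Qed.

Lemma sdpair1_shift f t :
  f \in wreath_base -> inB (wreath_shift f t) = (inB f ^ inT t)%g.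
Proof.
by move=> Bf; rewrite -(sdpair_act _ Bf (in_setT t)) /= /wreath_to Bf.
Qed.

Definition coord_morphism (i : I) : {morphism G >-> fT} :=
  [morphism of restrm (subsetT G) (delta i)].

Lemma coord_isom (i : I) :
  isom G (@set1gXn I (fun _ => gT) i G) (coord_morphism i).
Proof.
apply/isomP; split; first by rewrite injm_restrm ?injm_dfung1.
by rewrite morphim_restrm morphim_dfung1 setIid.
Qed.

Definition cfTensor (phi : I -> 'CF(G)) : 'CF(wreath_base) :=
  cfBigdprod (setXn_dprod (fun _ : I => G))
             (fun i => cfIsom (coord_isom i) (phi i)).

Lemma prod_dfung1 (f : fT) : f = (\prod_i delta i (f i))%g.
Proof.
apply/ffunP => i; rewrite prodg_ffun (big_only1 i) ?dfung1_id // => j ji _.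
by rewrite dfung1_dflt.
Qed.

Lemma dfung1_base i g : g \in G -> delta i g \in wreath_base.
Proof.
move=> Gg; rewrite in_wreath_base; apply/forallP => j.
by have [<- | /dfung1_dflt->] := eqVneq i j; rewrite ?dfung1_id.
Qed.

Lemma cfTensorE phi f : f \in wreath_base -> cfTensor phi f = \prod_i phi i (f i).
Proof.
move=> /[dup] Bf; rewrite in_wreath_base => /forallP Gf.
rewrite [in LHS](prod_dfung1 f) cfBigdprodE => [|i _]; last first.
  by apply/set1gXnP; exists (f i).
by apply: eq_bigr => i _; rewrite -[delta i _]/(coord_morphism i (f i)) cfIsomE.
Qed.

Lemma cfTensor_irr phi : (forall i, phi i \in irr G) -> cfTensor phi \in irr wreath_base.
Proof. by move=> irr_phi; apply: cfBigdprod_irr => i _; rewrite cfIsom_irr. Qed.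

Lemma cfTensor_inj (phi phi' : I -> 'CF(G)) d : d != 0 ->
    (forall i, phi i 1%g = d) -> (forall i, phi' i 1%g = d) ->
  cfTensor phi = cfTensor phi' -> phi =1 phi'.
Proof.
move=> d_neq0 phi1 phi'1 eq_phi i; apply/cfunP => g.
have [Gg | notGg] := boolP (g \in G); last by rewrite !cfun0.
have tensor_delta (ph : I -> 'CF(G)) : (forall j, ph j 1%g = d) ->
    cfTensor ph (delta i g) = ph i g * d ^+ #|[pred j | j != i]|.
  move=> ph1; rewrite cfTensorE ?dfung1_base // (bigD1 i) //= dfung1_id.
  by rewrite -prodr_const; congr (_ * _); apply: eq_bigr => j ji; rewrite dfung1_dflt 1?eq_sym.
have := congr1 (fun th : 'CF(_) => th (delta i g)) eq_phi.
by rewrite /= !tensor_delta //; apply: mulIf; rewrite expf_neq0.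
Qed.

Lemma cfTensor_shift phi t f : f \in wreath_base ->
  cfTensor phi (wreath_shift f t) = cfTensor (fun j => phi (j * t)%g) f.
Proof.
move=> Bf; rewrite !cfTensorE ?wreath_shift_base // (reindex_inj (mulIg t)).
by apply: eq_bigr => j _; rewrite ffunE mulgK.
Qed.

Lemma wbase_isom : isom wreath_base wbase inB.
Proof. by apply/isomP; split; [apply: injm_sdpair1 | ]. Qed.

Definition cfWreathInd phi : 'CF(wreath) := 'Ind[wreath] (cfIsom wbase_isom (cfTensor phi)).

Lemma cfWreathIndE phi f : f \in wreath_base ->
  cfWreathInd phi (inB f) = \sum_t \prod_j phi (j * t)%g (f j).
Proof.
move=> Bf; rewrite /cfWreathInd (cfIndEsdprod _ _ wreath_sdprod).
rewrite /wtop /= morphimEdom big_imset /=; last first.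
  by move=> s t _ _; apply: (injmP (injm_sdpair2 wreath_gact)); rewrite inE.
rewrite (eq_bigl predT) => [|t]; last by rewrite inE.
apply: eq_bigr => t _.
by rewrite -sdpair1_shift // (cfIsomE wbase_isom) ?wreath_shift_base // cfTensor_shift // cfTensorE.
Qed.

Lemma cfWreathInd_out phi x : x \notin wbase -> cfWreathInd phi x = 0.
Proof.
move=> notBx; rewrite /cfWreathInd (cfIndEsdprod _ _ wreath_sdprod) big1 // => y Ty.
have [_ _ _ nBT _] := sdprod_context wreath_sdprod.
by rewrite cfun0 // memJ_norm // (subsetP nBT).
Qed.

Lemma cfTensor_conjg phi t :
  (cfIsom wbase_isom (cfTensor phi) ^ inT t)%CF
    = cfIsom wbase_isom (cfTensor (fun j => phi (j * t^-1)%g)).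
Proof.
have [_ _ _ nBT _] := sdprod_context wreath_sdprod.
have Nt : inT t \in 'N(wbase)%g by rewrite (subsetP nBT) ?mem_morphim ?inE.
apply/cfunP => x; have [/morphimP[f _ Bf ->] | notBx] := boolP (x \in wbase).
  rewrite cfConjgE // -(morphV _ (in_setT t)) /= -sdpair1_shift //.
  by rewrite !(cfIsomE wbase_isom) ?wreath_shift_base // cfTensor_shift.
by rewrite !cfun0 // memJ_norm ?groupV.
Qed.

Lemma cfWreathInd_irr X : (forall i, X i \in irr G) -> injective X ->
  (forall i, X i 1%g = X 1%g 1%g) -> cfWreathInd X \in irr wreath.
Proof.
move=> Xirr Xinj X1; have X11_neq0 : X 1%g 1%g != 0.
  by have /irrP[k ->] := Xirr 1%g; apply: irr1_neq0.
have /irrP[s Ds] : cfIsom wbase_isom (cfTensor X) \in irr wbase.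
  by rewrite cfIsom_irr cfTensor_irr.
have [nsBW _ defW nBT _] := sdprod_context wreath_sdprod.
rewrite /cfWreathInd Ds inertia_Ind_irr //.
apply/eqP; rewrite eqEsubset (sub_Inertia _ (normal_sub nsBW)) andbT.
apply/subsetP => x Ix; have: x \in wreath by rewrite inE.
rewrite -defW => /mulsgP[y _ By /morphimP[t _ _ ->] Dx]; rewrite {x}Dx in Ix *.
have /setIP[_ It] : inT t \in 'I_wreath['chi_s]%g.
  have Iy := subsetP (sub_Inertia 'chi_s (normal_sub nsBW)) y By.
  by have := groupM (groupVr Iy) Ix; rewrite mulKg.
move: (inertiaJ It); rewrite -Ds cfTensor_conjg => /cfIsom_inj/cfTensor_inj/(_ 1%g).
rewrite mul1g => /(_ _ X11_neq0 (fun j => X1 _) X1)/Xinj/eqP.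
by rewrite invg_eq1 => /eqP->; rewrite morph1 mulg1.
Qed.

Lemma cfAut_cfTensor (u : {rmorphism algC -> algC}) phi :
  cfAut u (cfTensor phi) = cfTensor (fun i => cfAut u (phi i)).
Proof.
apply/cfunP => f; have [Bf | notBf] := boolP (f \in wreath_base); last first.
  by rewrite cfunE !cfun0 ?rmorph0.
by rewrite cfunE !cfTensorE // rmorph_prod; apply: eq_bigr => i _; rewrite cfunE.
Qed.

Lemma cfWreathInd_aut X (u : {rmorphism algC -> algC}) :
    (forall i, X i \in irr G) -> (forall i, X i 1%g = X 1%g 1%g) ->
  cfAut u (cfWreathInd X) = cfWreathInd X -> exists t, cfAut u (X 1%g) = X t.
Proof.
move=> Xirr X1 uX; pose Th Y t := cfTensor (fun j => Y (j * t)%g).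
pose X' i := cfAut u (X i); have X'irr i : X' i \in irr G by rewrite cfAut_irr.
have sum_Th : \sum_t Th X' t = \sum_t Th X t.
  apply/cfunP => f; rewrite !sum_cfunE.
  have [Bf | notBf] := boolP (f \in wreath_base); last first.
    by apply: eq_bigr => t _; rewrite !cfun0.
  transitivity (cfAut u (cfWreathInd X) (inB f)); last first.
    by rewrite uX cfWreathIndE //; apply: eq_bigr => t _; rewrite cfTensorE.
  rewrite cfunE cfWreathIndE // rmorph_sum; apply: eq_bigr => t _.
  by rewrite /Th -cfAut_cfTensor cfunE cfTensorE.
have Th_irr Y : (forall i, Y i \in irr G) -> forall t, Th Y t \in irr wreath_base.
  by move=> Yirr t; apply: cfTensor_irr.
have [t /cfTensor_inj eqX] := irr_sum_eq (Th_irr _ X'irr) (Th_irr _ Xirr) sum_Th 1%g.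
have X'1 i : X' i 1%g = X 1%g 1%g.
  by rewrite /X' -(X1 i); have /irrP[j ->] := Xirr i; apply: cfAut_irr1.
have X11_neq0 : X 1%g 1%g != 0 by have /irrP[j ->] := Xirr 1%g; apply: irr1_neq0.
by exists t; have := eqX _ X11_neq0 (fun i => X'1 _) (fun i => X1 _) 1%g; rewrite !mul1g.
Qed.

End WreathProduct.

Lemma cyclotomic_abelian (k : fieldType) (L : splittingFieldType k)
    (K E : {subfield L}) (w : L) N :
  N.-primitive_root w -> <<K; w>>%VS = E -> abelian 'Gal(E / K).
Proof.
move=> prw DE; have Ew : w \in E by rewrite -DE memv_adjoin.
have sKE : (K <= E)%VS by rewrite -DE subv_adjoin.
have w_pow (z : gal_of E) : exists i : nat, z w = w ^+ i.
  have : z w ^+ N = 1 by rewrite -rmorphXn prim_expr_order // rmorph1.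
  by case/(prim_rootP prw) => i ->; exists i.
apply/centsP => x Gx y Gy; apply/eqP/gal_eqP => a.
rewrite -{1}DE => /Fadjoin_polyP[p Kp ->].
rewrite -!horner_map !(fixedPoly_gal sKE) ?groupM //=; congr (p.[_]).
have [i xw] := w_pow x; have [j yw] := w_pow y.
(* rmorphXn exposes x and y through another coercion, hence the change. *)
rewrite !galM // xw yw !rmorphXn; change (y w ^+ i = x w ^+ j).
by rewrite xw yw -!exprM mulnC.
Qed.

Lemma galois_abelianS (k : fieldType) (L : splittingFieldType k)
    (K M E : {subfield L}) :
  galois K E -> abelian 'Gal(E / K) -> (K <= M <= E)%VS -> galois K M.
Proof.
move=> galKE abKE /andP[sKM sME].
have galME : galois M E by apply: galoisS galKE; rewrite sKM.
have nsG : ('Gal(E / M) <| 'Gal(E / K))%g by rewrite -sub_abelian_normal ?galS.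
by rewrite -(galois_fixedField galME); apply: normal_fixedField_galois.
Qed.

Section GaloisConjugates.
Variables (gT : finGroupType) (G : {group gT}) (chi : 'CF(G)) (chi_irr : chi \in irr G).
Variables (F : algC -> Prop) (n : nat) (sfF : subfieldC F).
Hypotheses (sFE : forall x, F x -> Qchar chi x) (degEF : field_degreeC F (Qchar chi) n).
Variables (Qn : splittingFieldType rat) (galQn : galois 1 {:Qn}).
Variables (QnC : {rmorphism Qn -> algC}) (ext : gal_of {:Qn} -> {rmorphism algC -> algC}).
Hypothesis extE : forall nu a, ext nu (QnC a) = QnC (nu a).
Variables (N : nat) (w : Qn).
Hypotheses (prw : N.-primitive_root w) (genw : <<1; w>>%VS = fullv).
Variable chiQn : gT -> Qn.
Hypothesis chiQnE : forall g, QnC (chiQn g) = chi g.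
Variables (Ep Fp : {subfield Qn}).
Hypotheses (EpE : forall x, x \in Ep <-> Qchar chi (QnC x))
  (FpF : forall x, x \in Fp <-> F (QnC x)).

Lemma Qchar_Qn y : Qchar chi y -> exists x, y = QnC x.
Proof.
move=> Ey; suff [x _ ->] : exists2 x, True & y = QnC x by exists x.
apply: (Ey (fun z => exists2 x, True & z = QnC x)); first exact: rmorph_image_subfieldC.
by move=> _ [g ->]; exists (chiQn g); rewrite ?chiQnE.
Qed.

Lemma chiQn_Ep g : chiQn g \in Ep.
Proof. by apply/EpE; rewrite chiQnE; apply: gen_fieldC_gen; exists g. Qed.

Lemma sFpEp : (Fp <= Ep)%VS.
Proof. by apply/subvP => x /FpF /sFE /EpE. Qed.

Lemma AEnd_eq_Ep (f1 f2 : 'AEnd(Qn)) :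
  (forall g, f1 (chiQn g) = f2 (chiQn g)) -> {in Ep, f1 =1 f2}.
Proof.
move=> f12 x /EpE Ex.
suff [a f12a /fmorph_inj-> //] : exists2 a, f1 a = f2 a & QnC x = QnC a.
apply: (Ex (fun z => exists2 a, f1 a = f2 a & z = QnC a)); last first.
  by move=> _ [g ->]; exists (chiQn g); rewrite ?chiQnE.
apply: rmorph_image_subfieldC => [|a b fa fb|a b fa fb]; first by rewrite !rmorph1.
  by rewrite !raddfB; congr (_ - _); [exact: fa | exact: fb].
by rewrite !fmorph_div; congr (_ / _); [exact: fa | exact: fb].
Qed.

Lemma galois_Fp_full : galois Fp {:Qn}.
Proof. by apply: galoisS galQn; rewrite sub1v subvf. Qed.

Lemma galois_Fp_Ep : galois Fp Ep.
Proof.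
have galEp : galois 1 Ep.
  apply: galois_abelianS galQn _ _; last by rewrite sub1v subvf.
  exact: cyclotomic_abelian prw genw.
by apply: galoisS galEp; rewrite sub1v sFpEp.
Qed.

Lemma card_gal_Ep_Fp : #|'Gal(Ep / Fp)%g| = n.
Proof.
rewrite -galois_dim ?galois_Fp_Ep //.
by rewrite (field_degreeC_dimv EpE FpF sfF Qchar_Qn sFE degEF) mulnK ?adim_gt0.
Qed.

Lemma Fp_sub_Ep_full : (Fp <= Ep <= {:Qn})%VS.
Proof. by rewrite sFpEp subvf. Qed.

Lemma normal_Fp_Ep : normalField Fp Ep.
Proof. by case/and3P: galois_Fp_Ep. Qed.

Local Notation I := (subg_of 'Gal(Ep / Fp)%G).

Definition gal_lift (s : gal_of Ep) : gal_of {:Qn} :=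
  odflt 1%g [pick nu in 'Gal({:Qn} / Fp)%g | gal Ep nu == s].

Lemma gal_liftE s : s \in 'Gal(Ep / Fp)%g -> {in Ep, gal_lift s =1 s}.
Proof.
move=> Gs; rewrite /gal_lift; case: pickP => [nu /andP[Gnu /eqP <-] | none] /=.
  by move=> a Epa; rewrite (normalField_cast_eq Fp_sub_Ep_full normal_Fp_Ep Gnu Epa).
move: Gs; rewrite -(normalField_img galois_Fp_full Fp_sub_Ep_full normal_Fp_Ep).
by case/morphimP => nu _ Gnu Ds; have := none nu; rewrite Gnu Ds eqxx.
Qed.

Lemma gal_restrict_Ep nu : nu \in 'Gal({:Qn} / Fp)%g -> gal Ep nu \in 'Gal(Ep / Fp)%g.
Proof.
move=> Gnu; rewrite -(normalField_img galois_Fp_full Fp_sub_Ep_full normal_Fp_Ep).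
exact: mem_morphim.
Qed.

Lemma gal_restrict_Ep_comp nu (s : gal_of Ep) a :
  nu \in 'Gal({:Qn} / Fp)%g -> a \in Ep -> nu (s a) = (s * gal Ep nu)%g a.
Proof.
move=> Gnu Epa; rewrite galM //.
by rewrite (normalField_cast_eq Fp_sub_Ep_full normal_Fp_Ep Gnu) // memv_gal.
Qed.

(* cfAut needs an automorphism of algC: t is lifted from Ep to Qn, then extended
   to algC by ext. *)
Definition chi_gal (t : I) : 'CF(G) := cfAut (ext (gal_lift (sgval t))) chi.

Lemma chi_galE t g : chi_gal t g = QnC (sgval t (chiQn g)).
Proof. by rewrite cfunE -chiQnE extE gal_liftE ?chiQn_Ep ?subgP. Qed.

Lemma chi_gal_irr t : chi_gal t \in irr G.
Proof. by rewrite cfAut_irr. Qed.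

Lemma chi_gal1 t : chi_gal t 1%g = chi 1%g.
Proof. by have [i Di] := irrP chi_irr; rewrite /chi_gal Di cfAut_irr1. Qed.

Lemma chi_gal_inj : injective chi_gal.
Proof.
move=> t t' eq_chi; apply/subg_inj/eqP/gal_eqP/AEnd_eq_Ep => g.
by apply: (fmorph_inj QnC); rewrite -!chi_galE eq_chi.
Qed.

Lemma card_I : #|I| = n.
Proof. by rewrite card_sub -card_gal_Ep_Fp; apply: eq_card => x; rewrite !inE. Qed.

Local Notation psi := (cfWreathInd chi_gal).

Lemma psi_irr : psi \in irr (wreath G I).
Proof.
apply: cfWreathInd_irr chi_gal_irr chi_gal_inj _ => t.
by rewrite !chi_gal1.
Qed.

Lemma psi1 : psi 1%g = n%:R * chi 1%g ^+ n.
Proof.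
rewrite -(morph1 (sdpair1_morphism (wreath_gact G I))) cfWreathIndE ?group1 //.
rewrite (eq_bigr (fun _ => chi 1%g ^+ #|I|)) => [|t _].
  by rewrite sumr_const card_I mulr_natl.
by rewrite -prodr_const; apply: eq_bigr => j _; rewrite oneg_ffun chi_gal1.
Qed.

Lemma psi_F x : F (psi x).
Proof.
have [/morphimP[f _ Bf ->] | notBx] := boolP (x \in wbase G I); last first.
  by rewrite cfWreathInd_out //; apply: subfieldC0.
pose A := \sum_(t : I) \prod_j sgval (j * t)%g (chiQn (f j)).
have -> : psi (sdpair1 _ f) = QnC A.
  rewrite cfWreathIndE // rmorph_sum; apply: eq_bigr => t _; rewrite rmorph_prod.
  by apply: eq_bigr => j _; rewrite chi_galE.
apply/FpF; rewrite -(galois_fixedField galois_Fp_full).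
apply/fixedFieldP => [|nu Gnu]; first exact: memvf.
pose r : I := subg _ (gal Ep nu).
have Dr : sgval r = gal Ep nu by rewrite subgK ?gal_restrict_Ep.
rewrite [RHS](reindex_inj (mulIg r)) rmorph_sum; apply: eq_bigr => t _.
rewrite rmorph_prod; apply: eq_bigr => j _; rewrite mulgA.
change (nu (sgval (j * t)%g (chiQn (f j))) = (sgval (j * t)%g * sgval r)%g (chiQn (f j))).
by rewrite Dr gal_restrict_Ep_comp ?chiQn_Ep.
Qed.

Lemma F_Qchar_psi x : F x -> Qchar psi x.
Proof.
move=> Fx; have [a Da] := Qchar_Qn (sFE Fx).
have Fpa : a \in Fp by apply/FpF; rewrite -Da.
have [Lp LpE] := rmorph_preimage_subfield QnC (gen_fieldC_subfield (fun y => exists h, y = psi h)).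
rewrite Da; apply/LpE.
have galL : galois Lp {:Qn} by apply: galoisS galQn; rewrite sub1v subvf.
rewrite -(galois_fixedField galL); apply/fixedFieldP => [|nu Gnu]; first exact: memvf.
have /cfWreathInd_aut[||t Dt] : cfAut (ext nu) psi = psi.
- apply/cfunP => h; rewrite cfunE; have [b Db] := Qchar_Qn (sFE (psi_F h)).
  have Lpb : b \in Lp by apply/LpE; rewrite -Db; apply: gen_fieldC_gen; exists h.
  by rewrite Db extE (fixed_gal (subvf Lp) Gnu Lpb).
- exact: chi_gal_irr.
- by move=> i; rewrite !chi_gal1.
have nu_t : {in Ep, gal_repr nu =1 sgval t}.
  apply: AEnd_eq_Ep => g; apply: (fmorph_inj QnC).
  have := congr1 (fun phi : 'CF(G) => phi g) Dt.
  by rewrite /= cfunE !chi_galE -extE => <-; rewrite gal_id.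
by rewrite nu_t ?(subvP sFpEp) // (fixed_gal sFpEp (subgP t) Fpa).
Qed.

Lemma wreath_conjugates_char :
  exists (hT : finGroupType) (H : {group hT}) (psi : 'CF(H)),
    [/\ psi \in irr H, (forall x, Qchar psi x <-> F x) & psi 1%g = n%:R * chi 1%g ^+ n].
Proof.
exists _, (wreath G I), psi; split; [exact: psi_irr | move=> x; split | exact: psi1].
  by move=> Qx; apply: (Qx F sfF) => _ [h ->]; apply: psi_F.
exact: F_Qchar_psi.
Qed.

End GaloisConjugates.

Unset Implicit Arguments.

Theorem theorem2p5 (gT : finGroupType) (G : {group gT}) (chi : 'CF(G))
  (Hchi : chi \in irr G) (F : algC -> Prop) (n : nat) :
  subfieldC F -> (forall x, F x -> Qchar chi x) ->
  field_degreeC F (Qchar chi) n ->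
  exists (hT : finGroupType) (H : {group hT}) (psi : 'CF(H)),
    [/\ psi \in irr H,
        (forall x, Qchar psi x <-> F x) &
        psi 1%g = n%:R * chi 1%g ^+ n].
Proof.
move=> sfF sFE degEF.
have [Qn galQn [QnC gQnC [w [prw genw] QnG]]] := group_num_field_exists G.
have extE nu a : sval (gQnC nu) (QnC a) = QnC (nu a) by rewrite (svalP (gQnC nu)).
have /fin_all_exists[chiQn chiQnE] g : exists a, QnC a = chi g.
  have [Gg | /cfun0->] := boolP (g \in G); last by exists 0; rewrite rmorph0.
  by have [a] := QnG _ G chi (irrWchar Hchi) g (order_dvdG Gg); exists a.
have [Ep EpE] := rmorph_preimage_subfield QnC (gen_fieldC_subfield (fun y => exists g, y = chi g)).
have [Fp FpF] := rmorph_preimage_subfield QnC sfF.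
exact: (wreath_conjugates_char Hchi sfF sFE degEF galQn extE prw genw chiQnE EpE FpF).
Qed.
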